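(* For every bi-separated graph with distinguished subsets $\dot E=(E,(C,S),(D,T))$, the natural $K$-algebra homomorphism from the path algebra $K(E)$ to $\mathcal A_K(\dot E)$ (sending each vertex and edge to its class) is injective.
   Context: $K$ is a field. A graph $E=(E^0,E^1,r,s)$; its path algebra $K(E)$ is the free $K$-algebra on $E^0\cup E^1$ modulo $vw=\delta_{vw}v$ and $s(e)e=e=er(e)$. A bi-separated graph with distinguished subsets is $\dot E=(E,(C,S),(D,T))$ where $C=\bigsqcup_v C_v$, $C_v$ a partition of $s^{-1}(v)$ into nonempty sets for each non-sink $v$; $D=\bigsqcup_v D_v$, $D_v$ a partition of $r^{-1}(v)$ for each non-source $v$; $|X\cap Y|\le1$ for $X\in C,Y\in D$; $S\subseteq C_{\rm fin}=\{X\in C:|X|<\infty\}$, $T\subseteq D_{\rm fin}=\{Y\in D:|Y|<\infty\}$. For $X\in C$, $s(X)$ is the common source of its edges; for $Y\in D$, $r(Y)$ the common range; $XY=YX$ is the unique edge of $X\cap Y$ if nonempty, else $0$. The double graph $\widehat E$ adds edges $e^*$ with $s(e^* )=r(e)$, $r(e^* )=s(e)$, and $K(\widehat E)$ is its path algebra. The Cohn–Leavitt path algebra $\mathcal A_K(\dot E)$ is the quotient of $K(\widehat E)$ by: for all $X,X'\in S$, $\sum_{Y\in D}(XY)(YX')^*=\delta_{X,X'}s(X)$; for all $Y,Y'\in T$, $\sum_{X\in C}(YX)^*(XY')=\delta_{Y,Y'}r(Y)$ (with $0^*=0$). *)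

(* Free (unital) associative K-algebras are modelled concretely:
   an element is a finite formal K-linear combination of words over the generators,
   represented by a list of (coefficient, word) pairs; two lists denote the same
   element iff all word-coefficients agree. *)
From HB Require Import structures.
From mathcomp Require Import all_boot all_order all_algebra.
Set Implicit Arguments. Unset Strict Implicit. Unset Printing Implicit Defensive.
Import GRing.Theory.
Local Open Scope ring_scope.

Section FreeAlg.
Variable K : fieldType.
Variable G : eqType.

Definition fpoly := seq (K * seq G).

Definition fcoef (p : fpoly) (w : seq G) : K := \sum_(x <- p | x.2 == w) x.1.

Definition fsandwich (c : K) (a : seq G) (p : fpoly) (b : seq G) : fpoly :=
  [seq (c * x.1, a ++ x.2 ++ b) | x <- p].

(* f lies in the two-sided ideal of the free algebra K<A> generated by the
   elements satisfying R, where A (a predicate on G) is the generator set: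
   f = sum_i c_i a_i r_i b_i with a_i, b_i words in A and R r_i. *)
Definition in_ideal (A : pred G) (R : fpoly -> Prop) (f : fpoly) : Prop :=
  exists l : seq (K * seq G * fpoly * seq G),
    (forall t, t \in l -> [/\ R t.1.2, all A t.1.1.2 & all A t.2]) /\
    forall w, fcoef f w = fcoef (flatten [seq fsandwich t.1.1.1 t.1.1.2 t.1.2 t.2 | t <- l]) w.
End FreeAlg.

Section Graph.
Variables (K : fieldType) (V Ed : eqType) (s r : Ed -> V).

(* generators of the double graph: vertices, edges e, ghost edges e^* *)
Definition gen := (V + (Ed + Ed))%type.
Definition gv (v : V) : gen := inl v.
Definition ge (e : Ed) : gen := inr (inl e).
Definition gs (e : Ed) : gen := inr (inr e).
Definition nonghost (g : gen) : bool := if g is inr (inr _) then false else true.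

(* defining relations of the path algebra K(E) (ghosts = false) or of K(hat E)
   (ghosts = true), written as elements that must vanish *)
Definition path_rel (ghosts : bool) (p : fpoly K gen) : Prop :=
  (exists v w : V, p = (1, [:: gv v; gv w]) :: (if v == w then [:: (-1, [:: gv v])] else [::]))
  \/ (exists e, p = [:: (1, [:: gv (s e); ge e]); (-1, [:: ge e])])
  \/ (exists e, p = [:: (1, [:: ge e; gv (r e)]); (-1, [:: ge e])])
  \/ (ghosts /\ exists e, p = [:: (1, [:: gv (r e); gs e]); (-1, [:: gs e])])
  \/ (ghosts /\ exists e, p = [:: (1, [:: gs e; gv (s e)]); (-1, [:: gs e])]).

Definition enum_block (I : eqType) (blk : Ed -> I) (X : I) (l : seq Ed) : Prop :=
  uniq l /\ forall e, (e \in l) = (blk e == X).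

Variables (CI DI : eqType) (cblk : Ed -> CI) (dblk : Ed -> DI)
          (inS : CI -> Prop) (inT : DI -> Prop).

(* relation for X, X' in S:  sum_{Y in D} (XY)(YX')^* - delta_{X,X'} s(X);
   the nonzero terms are e f^* with e in X, f in X', e and f in the same D-block *)
Definition CL_rel_S (p : fpoly K gen) : Prop :=
  exists (X X' : CI) (lX lX' : seq Ed) (e0 : Ed),
    [/\ inS X, inS X', enum_block cblk X lX, enum_block cblk X' lX' & cblk e0 = X] /\
    p = [seq (1, [:: ge e; gs f]) | e <- lX, f <- [seq f <- lX' | dblk f == dblk e]]
        ++ (if X == X' then [:: (-1, [:: gv (s e0)])] else [::]).

(* relation for Y, Y' in T:  sum_{X in C} (YX)^*(XY') - delta_{Y,Y'} r(Y) *)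
Definition CL_rel_T (p : fpoly K gen) : Prop :=
  exists (Y Y' : DI) (lY lY' : seq Ed) (e0 : Ed),
    [/\ inT Y, inT Y', enum_block dblk Y lY, enum_block dblk Y' lY' & dblk e0 = Y] /\
    p = [seq (1, [:: gs e; ge f]) | e <- lY, f <- [seq f <- lY' | cblk f == cblk e]]
        ++ (if Y == Y' then [:: (-1, [:: gv (r e0)])] else [::]).

Definition CL_rel (p : fpoly K gen) : Prop :=
  path_rel true p \/ CL_rel_S p \/ CL_rel_T p.
End Graph.

(* Modulo the relations of K(E) every word is 0 or its normal form (the empty
   word, a vertex, or a path of E), so f is congruent to sum_m c_m m, where c_m
   is the total coefficient in f of the words with normal form m; it suffices
   that every c_m vanishes (Section NormalForms).  If the generators of the
   double graph act by partial maps so that all Cohn-Leavitt relations act as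
   zero, each matrix coefficient w |-> [w.y = z] kills f; as a word acts like
   its normal form, this is a linear relation among the c_m (Section Actions).
   The zero action gives c_(empty word) = 0, and a "tree action" grown from a
   vertex v, resp. from the spine of a path p, gives c_v = 0, resp. c_p = 0
   (Section TreeAction): at a node over s(X), X in S, exactly one ghost of an
   edge of X acts (dually for T), so the Cohn-Leavitt relations act as zero. *)
From HB Require Import structures.
From mathcomp Require Import all_boot all_order all_algebra.
From mathcomp Require Import ring.
From Stdlib Require Import ClassicalEpsilon.
Set Implicit Arguments. Unset Strict Implicit. Unset Printing Implicit Defensive.
Import GRing.Theory.
Local Open Scope ring_scope.

Section FormalSums.
Variable K : fieldType.

(* The value of the formal sum l = sum_i c_i u_i under a functional h on the
   "words" u_i; two formal sums denote the same element iff they have the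
   same values under all functionals. *)
Definition feval (T : Type) (l : seq (K * T)) (h : T -> K) : K :=
  \sum_(x <- l) x.1 * h x.2.

Lemma feval_nil (T : Type) h : feval (@nil (K * T)) h = 0.
Proof. by rewrite /feval big_nil. Qed.

Lemma feval_cons (T : Type) c (u : T) l h : feval ((c, u) :: l) h = c * h u + feval l h.
Proof. by rewrite /feval big_cons. Qed.

Lemma feval_cat (T : Type) (l1 l2 : seq (K * T)) h :
  feval (l1 ++ l2) h = feval l1 h + feval l2 h.
Proof. by rewrite /feval big_cat. Qed.

Lemma feval_flatten (T : Type) (L : seq (seq (K * T))) h :
  feval (flatten L) h = \sum_(p <- L) feval p h.
Proof. by rewrite /feval big_flatten. Qed.

Lemma eq_feval (T : Type) (l : seq (K * T)) h1 h2 : h1 =1 h2 -> feval l h1 = feval l h2.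
Proof. by move=> E; apply: eq_bigr => x _; rewrite E. Qed.

Lemma feval_sandwich (T : eqType) c (a : seq T) p b h :
  feval (fsandwich c a p b) h = c * feval p (fun u => h (a ++ u ++ b)).
Proof.
rewrite /feval /fsandwich big_map big_distrr /=.
by apply: eq_bigr => x _; rewrite mulrA.
Qed.

Lemma sum_cond_const (T : Type) (l : seq T) (P : pred T) (c : K) :
  \sum_(e <- l) (if P e then c else 0) = c *+ count P l.
Proof. by rewrite -big_mkcond big_const_seq iter_addr_0. Qed.

Lemma feval_by_word (T : eqType) (l : seq (K * T)) h :
  feval l h = \sum_(u <- undup (map snd l)) (\sum_(x <- l | x.2 == u) x.1) * h u.
Proof.
under [RHS]eq_bigr => u _ do rewrite big_distrl big_mkcond /=.
rewrite exchange_big /feval; apply: eq_big_seq => x xl.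
rewrite (eq_bigr (fun u => if u == x.2 then x.1 * h x.2 else 0)); last first.
  by move=> u _; rewrite eq_sym; case: eqP => [->|]; rewrite ?mul0r.
by rewrite sum_cond_const count_uniq_mem ?undup_uniq // mem_undup map_f.
Qed.

Lemma feval_eq0 (T : eqType) (l : seq (K * T)) h :
  (forall u, h u != 0 -> \sum_(x <- l | x.2 == u) x.1 = 0) -> feval l h = 0.
Proof.
move=> H; rewrite feval_by_word big1 // => u _.
by have [->|/H ->] := eqVneq (h u) 0; rewrite ?mulr0 ?mul0r.
Qed.

Lemma fcoef_feval (T : eqType) (p : fpoly K T) w :
  fcoef p w = feval p (fun u => (u == w)%:R).
Proof.
rewrite /fcoef /feval big_mkcond; apply: eq_bigr => x _.
by case: eqP => _; rewrite ?mulr1 ?mulr0.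
Qed.

Lemma feval_fcoef (T : eqType) (p q : fpoly K T) :
  (forall w, fcoef p w = fcoef q w) -> forall h, feval p h = feval q h.
Proof.
move=> E h; apply/eqP; rewrite -subr_eq0; apply/eqP.
have -> : feval p h - feval q h = feval (p ++ [seq (- x.1, x.2) | x <- q]) h.
  rewrite feval_cat /feval big_map -sumrN.
  by congr (_ + _); apply: eq_bigr => x _; rewrite mulNr.
by apply: feval_eq0 => u _; rewrite big_cat big_map /= sumrN -!/(fcoef _ u) E subrr.
Qed.

Lemma fcoef_eq (T : eqType) (p q : fpoly K T) :
  (forall h, feval p h = feval q h) -> forall w, fcoef p w = fcoef q w.
Proof. by move=> E w; rewrite !fcoef_feval E. Qed.

End FormalSums.

Section Ideal.
Variables (K : fieldType) (G : eqType) (A : pred G) (R : fpoly K G -> Prop).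

Lemma in_ideal_feval (p q : fpoly K G) : in_ideal A R p ->
  (forall h, feval p h = feval q h) -> in_ideal A R q.
Proof.
case=> l [Hl Hc] E; exists l; split => // w.
by rewrite -(Hc w); apply: fcoef_eq => h; rewrite E.
Qed.

Lemma in_ideal_nil : in_ideal A R [::].
Proof. by exists [::]. Qed.

Lemma in_ideal_cat p q : in_ideal A R p -> in_ideal A R q -> in_ideal A R (p ++ q).
Proof.
case=> l1 [H1 C1] [l2 [H2 C2]]; exists (l1 ++ l2); split.
  by move=> t; rewrite mem_cat => /orP [] ?; [apply: H1 | apply: H2].
move=> w; rewrite map_cat flatten_cat /fcoef !big_cat /=.
by rewrite -/(fcoef p w) -/(fcoef q w) C1 C2.
Qed.

Lemma in_ideal_gen c a r b : R r -> all A a -> all A b ->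
  in_ideal A R (fsandwich c a r b).
Proof.
move=> Hr Ha Hb; exists [:: (c, a, r, b)]; split.
  by move=> t; rewrite inE => /eqP ->.
by move=> w; rewrite /= cats0.
Qed.

Lemma in_ideal_sandwich c a p b : in_ideal A R p -> all A a -> all A b ->
  in_ideal A R (fsandwich c a p b).
Proof.
case=> l [Hl Hc] Ha Hb.
exists [seq (c * t.1.1.1, a ++ t.1.1.2, t.1.2, t.2 ++ b) | t <- l]; split.
  by move=> t /mapP [t0 /Hl [h1 h2 h3] ->]; rewrite /= !all_cat Ha Hb h2 h3.
apply: fcoef_eq => h.
rewrite feval_sandwich (feval_fcoef Hc) !feval_flatten big_distrr !big_map.
apply: eq_bigr => t _; rewrite /= !feval_sandwich mulrA; congr (_ * _).
by apply: eq_feval => u; rewrite !catA.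
Qed.

Lemma in_ideal_flatten (L : seq (fpoly K G)) :
  (forall p, p \in L -> in_ideal A R p) -> in_ideal A R (flatten L).
Proof.
elim: L => [|p L IH] H /=; first exact: in_ideal_nil.
apply: in_ideal_cat; first by apply: H; rewrite inE eqxx.
by apply: IH => q hq; apply: H; rewrite inE hq orbT.
Qed.

End Ideal.

Section Actions.
Variables (K : fieldType) (G : eqType) (N : Type) (rho : G -> N -> option N).

(* The partial action of a word, its letters acting from right to left. *)
Definition act (w : seq G) (y : N) : option N :=
  foldr (fun g o => obind (rho g) o) (Some y) w.

Lemma act_cat a b y : act (a ++ b) y = obind (act a) (act b y).
Proof.
elim: a => [|g a IH] /=; first by case: (act b y).
by rewrite IH; case: (act b y).
Qed.

Lemma act_rcons w g y : act (rcons w g) y = obind (act w) (rho g y).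
Proof. by rewrite -cats1 act_cat. Qed.

Definition mcoef (y : N) (h : N -> K) (w : seq G) : K := oapp h 0 (act w y).

Definition annihilates (R : fpoly K G -> Prop) : Prop :=
  forall p, R p -> forall y h, feval p (mcoef y h) = 0.

Lemma annihilates_ideal (A : pred G) (R : fpoly K G -> Prop) f :
  annihilates R -> in_ideal A R f -> forall y h, feval f (mcoef y h) = 0.
Proof.
move=> HR [l [Hl Hc]] y h.
rewrite (feval_fcoef Hc) feval_flatten big_map big1_seq //.
move=> -[[[c a] p] b] /andP [_ /Hl [Hp _ _]] /=; rewrite feval_sandwich.
case E: (act b y) => [y'|]; last first.
  by rewrite /feval big1 ?mulr0 // => x _; rewrite /mcoef !act_cat E mulr0.
rewrite (@eq_feval _ _ _ _ (mcoef y' (fun z => mcoef z h a))) ?HR ?mulr0 //.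
by move=> u; rewrite /mcoef !act_cat E /=; case: (act u y').
Qed.

End Actions.

Lemma mcoef_indicator (K : fieldType) (G N : eqType) (rho : G -> N -> option N) y z w :
  mcoef rho y (fun u => (u == z)%:R) w = (act rho w y == Some z)%:R :> K.
Proof. by rewrite /mcoef; case: (act rho w y) => [u|] //=; rewrite (inj_eq Some_inj). Qed.

Section NormalForms.
Variables (K : fieldType) (V Ed : eqType) (s r : Ed -> V).
Local Notation NG := (@nonghost V Ed).
Local Notation PR := (@path_rel K V Ed s r false).
Local Notation gV := (@gv V Ed).
Local Notation gE := (@ge V Ed).

(* Normal forms of nonzero words of K(E): the empty word, a vertex, or a
   nonempty sequence of edges. *)
Definition NF := option (V + (Ed * seq Ed)).

Definition nf_word (m : NF) : seq (gen V Ed) :=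
  match m with
  | None => [::]
  | Some (inl v) => [:: gV v]
  | Some (inr (e, L)) => map gE (e :: L)
  end.

(* The normal form of g m, or None if g m = 0 in K(E). *)
Definition nf_cons (g : gen V Ed) (m : NF) : option NF :=
  match g, m with
  | inl v, None => Some (Some (inl v))
  | inl v, Some (inl u) => if v == u then Some m else None
  | inl v, Some (inr (e, L)) => if v == s e then Some m else None
  | inr (inl e), None => Some (Some (inr (e, [::])))
  | inr (inl e), Some (inl u) => if r e == u then Some (Some (inr (e, [::]))) else None
  | inr (inl e), Some (inr (f, L)) =>
      if r e == s f then Some (Some (inr (e, f :: L))) else None
  | inr (inr _), _ => None
  end.

Fixpoint nf (w : seq (gen V Ed)) : option NF :=
  if w is g :: w' then obind (nf_cons g) (nf w') else Some None.

Definition nf_is_path (m : NF) : bool :=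
  if m is Some (inr (e, L)) then path (fun a b => r a == s b) e L else true.

Lemma nf_path w m : nf w = Some m -> nf_is_path m.
Proof.
elim: w m => [|g w IH] m /=; first by case=> <-.
case: (nf w) IH => [m0|] // /(_ m0 erefl) Hm0.
case: g => [v|[e|e]] //=; case: m0 Hm0 => [[u|[f L]]|] //= Hm0.
- by case: eqP => // _ [<-].
- by case: eqP => // _ [<-].
- by move=> [<-].
- by case: eqP => // _ [<-].
- by case: eqP => // H [<-] /=; rewrite H eqxx.
- by move=> [<-].
Qed.

Definition vertex_rel v w : fpoly K (gen V Ed) :=
  (1, [:: gV v; gV w]) :: (if v == w then [:: (-1, [:: gV v])] else [::]).
Definition source_rel e : fpoly K (gen V Ed) :=
  [:: (1, [:: gV (s e); gE e]); (-1, [:: gE e])].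
Definition range_rel e : fpoly K (gen V Ed) :=
  [:: (1, [:: gE e; gV (r e)]); (-1, [:: gE e])].

Lemma vertex_rel_ideal v w c a b : all NG a -> all NG b ->
  in_ideal NG PR (fsandwich c a (vertex_rel v w) b).
Proof. by move=> Ha Hb; apply: in_ideal_gen => //; left; exists v, w. Qed.
Lemma source_rel_ideal e c a b : all NG a -> all NG b ->
  in_ideal NG PR (fsandwich c a (source_rel e) b).
Proof. by move=> Ha Hb; apply: in_ideal_gen => //; right; left; exists e. Qed.
Lemma range_rel_ideal e c a b : all NG a -> all NG b ->
  in_ideal NG PR (fsandwich c a (range_rel e) b).
Proof. by move=> Ha Hb; apply: in_ideal_gen => //; right; right; left; exists e. Qed.

Lemma all_nonghost_edges L : all NG (map gE L).
Proof. by elim: L. Qed.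

Definition nf_cons_diff g m : fpoly K (gen V Ed) :=
  (1, g :: nf_word m) :: (if nf_cons g m is Some m' then [:: (-1, nf_word m')] else [::]).

Ltac feval_ring :=
  rewrite ?feval_cat ?feval_sandwich ?feval_cons ?feval_nil /= ?cats0; ring.

Lemma nf_cons_diff_vertex v m : in_ideal NG PR (nf_cons_diff (gV v) m).
Proof.
rewrite /nf_cons_diff; case: m => [[u|[f L]]|] /=.
- apply: (in_ideal_feval (vertex_rel_ideal v u 1 (a := [::]) (b := [::]) erefl erefl)).
  by case: (eqVneq v u) => [<-|ne] h; rewrite /vertex_rel ?eqxx ?(negbTE ne); feval_ring.
- case: (eqVneq v (s f)) => [->|ne].
    apply: (in_ideal_feval (source_rel_ideal f 1 (a := [::]) erefl (all_nonghost_edges L))).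
    by move=> h; feval_ring.
  apply: (in_ideal_feval (in_ideal_cat
     (vertex_rel_ideal v (s f) 1 (a := [::]) erefl (all_nonghost_edges (f :: L)))
     (source_rel_ideal f (-1) (a := [:: gV v]) erefl (all_nonghost_edges L)))).
  by move=> h; rewrite /vertex_rel (negbTE ne); feval_ring.
- by apply: (in_ideal_feval (in_ideal_nil _ _)) => h; feval_ring.
Qed.

Lemma nf_cons_diff_edge e m : in_ideal NG PR (nf_cons_diff (gE e) m).
Proof.
rewrite /nf_cons_diff; case: m => [[u|[f L]]|] /=.
- case: (eqVneq (r e) u) => [<-|ne].
    apply: (in_ideal_feval (range_rel_ideal e 1 (a := [::]) (b := [::]) erefl erefl)).
    by move=> h; feval_ring.
  apply: (in_ideal_feval (in_ideal_cat
     (vertex_rel_ideal (r e) u 1 (a := [:: gE e]) (b := [::]) erefl erefl)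
     (range_rel_ideal e (-1) (a := [::]) (b := [:: gV u]) erefl erefl))).
  by move=> h; rewrite /vertex_rel (negbTE ne); feval_ring.
- case: (eqVneq (r e) (s f)) => [_|ne].
    by apply: (in_ideal_feval (in_ideal_nil _ _)) => h; feval_ring.
  apply: (in_ideal_feval (in_ideal_cat
     (vertex_rel_ideal (r e) (s f) 1 (a := [:: gE e]) erefl (all_nonghost_edges (f :: L)))
     (in_ideal_cat
       (source_rel_ideal f (-1) (a := [:: gE e; gV (r e)]) erefl (all_nonghost_edges L))
       (range_rel_ideal e (-1) (a := [::]) erefl (all_nonghost_edges (f :: L)))))).
  by move=> h; rewrite /vertex_rel (negbTE ne); feval_ring.
- by apply: (in_ideal_feval (in_ideal_nil _ _)) => h; feval_ring.
Qed.

Definition nf_diff w : fpoly K (gen V Ed) :=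
  (1, w) :: (if nf w is Some m then [:: (-1, nf_word m)] else [::]).

Lemma nf_diff_ideal w : all NG w -> in_ideal NG PR (nf_diff w).
Proof.
elim: w => [|g w IH] /=.
  by move=> _; apply: (in_ideal_feval (in_ideal_nil _ _)) => h; feval_ring.
move=> /andP [Hg /IH Hw].
have Hg1 : all NG [:: g] by rewrite /= Hg.
have Hgw := in_ideal_sandwich 1 (a := [:: g]) (b := [::]) Hw Hg1 erefl.
rewrite /nf_diff /=; move: Hgw; rewrite /nf_diff.
case: (nf w) => [m|] Hgw /=; last by apply: (in_ideal_feval Hgw) => h; feval_ring.
have Hcons : in_ideal NG PR (nf_cons_diff g m).
  case: g Hg {Hg1 Hgw} => [v|[e|e]] // _.
  - exact: nf_cons_diff_vertex.
  - exact: nf_cons_diff_edge.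
apply: (in_ideal_feval (in_ideal_cat Hgw Hcons)) => h.
by rewrite /nf_cons_diff; case: (nf_cons g m) => [m'|]; feval_ring.
Qed.

Lemma act_nf (N : eqType) (rho : gen V Ed -> N -> option N) :
  annihilates rho PR -> forall w y, all NG w ->
  act rho w y = (if nf w is Some m then act rho (nf_word m) y else None).
Proof.
move=> Hk w y Hw.
have Hz z := annihilates_ideal Hk (nf_diff_ideal Hw) y (fun u => (u == z)%:R).
have one_neq0 : (1 : K) != 0 := oner_neq0 K.
move: Hz; rewrite /nf_diff; case: (nf w) => [m|] Hz; last first.
  case E: (act rho w y) => [z|] //; move: (Hz z).
  rewrite feval_cons feval_nil mcoef_indicator E eqxx => /eqP.
  by rewrite mulr1 addr0 (negbTE one_neq0).
case E1: (act rho w y) => [z1|]; case E2: (act rho (nf_word m) y) => [z2|] //.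
- move: (Hz z1); rewrite !feval_cons feval_nil !mcoef_indicator E1 E2 !(inj_eq Some_inj) eqxx.
  by case: eqP => [->|_] // /eqP; rewrite mulr0 !addr0 mulr1 (negbTE one_neq0).
- move: (Hz z1); rewrite !feval_cons feval_nil !mcoef_indicator E1 E2 eqxx /=.
  by move/eqP; rewrite mulr0 !addr0 mulr1 (negbTE one_neq0).
- move: (Hz z2); rewrite !feval_cons feval_nil !mcoef_indicator E1 E2 eqxx /=.
  by move/eqP; rewrite mulr0 !add0r addr0 mulr1 oppr_eq0 (negbTE one_neq0).
Qed.

End NormalForms.

Section TreeAction.
Variables (K : fieldType) (V Ed : eqType) (s r : Ed -> V)
  (CI DI : eqType) (cblk : Ed -> CI) (dblk : Ed -> DI)
  (inS : CI -> Prop) (inT : DI -> Prop).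
Hypothesis hC : forall e f, cblk e = cblk f -> s e = s f.
Hypothesis hD : forall e f, dblk e = dblk f -> r e = r f.

(* A chosen representative edge of each nonempty block in S, resp. T; new
   children of a node are only ever created through representatives, which
   makes exactly one edge of each block usable at each node. *)
Definition rep_S (X : CI) : option Ed :=
  match excluded_middle_informative (inS X /\ exists e, cblk e = X) with
  | left H => Some (proj1_sig (constructive_indefinite_description _ (proj2 H)))
  | right _ => None
  end.
Definition rep_T (Y : DI) : option Ed :=
  match excluded_middle_informative (inT Y /\ exists e, dblk e = Y) with
  | left H => Some (proj1_sig (constructive_indefinite_description _ (proj2 H)))
  | right _ => None
  end.

Lemma rep_S_blk X e : rep_S X = Some e -> cblk e = X.
Proof.
rewrite /rep_S; case: excluded_middle_informative => // H [<-].
by case: constructive_indefinite_description.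
Qed.
Lemma rep_T_blk Y e : rep_T Y = Some e -> dblk e = Y.
Proof.
rewrite /rep_T; case: excluded_middle_informative => // H [<-].
by case: constructive_indefinite_description.
Qed.

Lemma rep_S_exists X e : inS X -> cblk e = X -> exists f, rep_S X = Some f.
Proof.
move=> HX He; rewrite /rep_S; case: excluded_middle_informative => [H|[]].
  by eexists.
by split=> //; exists e.
Qed.
Lemma rep_T_exists Y e : inT Y -> dblk e = Y -> exists f, rep_T Y = Some f.
Proof.
move=> HY He; rewrite /rep_T; case: excluded_middle_informative => [H|[]].
  by eexists.
by split=> //; exists e.
Qed.

(* The tree is grown from a spine: the path es starting at the vertex v0.
   Its spine nodes (i, [::]), i <= size es, carry the vertices of the path. *)
Variables (v0 : V) (es : seq Ed).

Definition spine (i : nat) : option Ed := nth None (map Some es) i.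
Definition spine_vertex (i : nat) : V := if i is j.+1 then oapp r v0 (spine j) else v0.

Hypothesis spine_path : forall i e, spine i = Some e -> s e = spine_vertex i.

Lemma spine_some i e : spine i = Some e -> (i < size es)%N /\ nth e es i = e.
Proof.
rewrite /spine; case: (ltnP i (size es)) => H; first by rewrite (nth_map e) // => -[->].
by rewrite nth_default ?size_map.
Qed.

(* A node (i, w) is reached from the spine node i by the steps recorded in
   w, last step first: (true, e) crosses from s e to r e (action of the ghost e^* ),
   (false, e) crosses from r e to s e (action of e). *)
Definition Node := (nat * seq (bool * Ed))%type.

Definition node_vertex (x : Node) : V :=
  match x with
  | (i, [::]) => spine_vertex i
  | (_, (true, e) :: _) => r e
  | (_, (false, e) :: _) => s e
  end.

(* Some tree edge at x, having x as its source, lies in the C-block X. *)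
Definition used_C (x : Node) (X : CI) : bool :=
  match x with
  | (i, [::]) => if spine i is Some e then cblk e == X else false
  | (_, (false, e) :: _) => cblk e == X
  | _ => false
  end.

(* Some tree edge at x, having x as its range, lies in the D-block Y. *)
Definition used_D (x : Node) (Y : DI) : bool :=
  match x with
  | (i, [::]) => if i is j.+1 then (if spine j is Some e then dblk e == Y else false) else false
  | (_, (true, e) :: _) => dblk e == Y
  | _ => false
  end.

Definition fresh_s (x : Node) e :=
  (rep_S (cblk e) == Some e) && (s e == node_vertex x) && ~~ used_C x (cblk e).
Definition fresh_e (x : Node) e :=
  (rep_T (dblk e) == Some e) && (r e == node_vertex x) && ~~ used_D x (dblk e).

Fixpoint valid_steps (i : nat) (w : seq (bool * Ed)) : bool :=
  match w with
  | [::] => (i <= size es)%N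
  | (b, e) :: w' => valid_steps i w' && (if b then fresh_s (i, w') e else fresh_e (i, w') e)
  end.
Definition valid (x : Node) := valid_steps x.1 x.2.

Lemma valid_nil i : valid (i, [::]) = (i <= size es)%N.
Proof. by []. Qed.
Lemma valid_cons i b e w : valid (i, (b, e) :: w) =
  valid (i, w) && (if b then fresh_s (i, w) e else fresh_e (i, w) e).
Proof. by []. Qed.
Arguments valid : simpl never.

Definition existing_e (x : Node) e : option Node :=
  match x with
  | (i, [::]) => if i is j.+1 then (if spine j == Some e then Some (j, [::]) else None) else None
  | (i, (true, e') :: w) => if e' == e then Some (i, w) else None
  | _ => None
  end.
Definition existing_s (x : Node) e : option Node :=
  match x with
  | (i, [::]) => if spine i == Some e then Some (i.+1, [::]) else None
  | (i, (false, e') :: w) => if e' == e then Some (i, w) else None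
  | _ => None
  end.

Definition rho_e e (x : Node) : option Node :=
  if ~~ valid x then None else
  if existing_e x e is Some y then Some y else
  if fresh_e x e then Some (x.1, (false, e) :: x.2) else None.
Definition rho_s e (x : Node) : option Node :=
  if ~~ valid x then None else
  if existing_s x e is Some y then Some y else
  if fresh_s x e then Some (x.1, (true, e) :: x.2) else None.
Definition rho_v v (x : Node) : option Node :=
  if valid x && (node_vertex x == v) then Some x else None.

Definition tree_rho (g : gen V Ed) : Node -> option Node :=
  match g with
  | inl v => rho_v v
  | inr (inl e) => rho_e e
  | inr (inr e) => rho_s e
  end.

Lemma existing_e_used x e y : existing_e x e = Some y -> used_D x (dblk e).
Proof.
by case: x => [[|i] [|[[] e'] w]] //=; case: eqP => // ->.
Qed.

Lemma existing_s_used x e y : existing_s x e = Some y -> used_C x (cblk e).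
Proof.
by case: x => [i [|[[] e'] w]] //=; case: eqP => // ->.
Qed.

Lemma existing_e_uniq x e e' y y' :
  existing_e x e = Some y -> existing_e x e' = Some y' -> e = e'.
Proof.
case: x => [[|i] [|[[] e0] w]] //=; try by case: eqP => // <-; case: eqP.
case: (spine i) => [e1|] //=; rewrite !(inj_eq Some_inj).
by case: eqP => // <-; case: eqP.
Qed.

Lemma existing_s_uniq x e e' y y' :
  existing_s x e = Some y -> existing_s x e' = Some y' -> e = e'.
Proof.
case: x => [i [|[[] e0] w]] //=; last by case: eqP => // <-; case: eqP.
case: (spine i) => [e1|] //=; rewrite !(inj_eq Some_inj).
by case: eqP => // <-; case: eqP.
Qed.

Lemma existing_e_unused x e : ~~ used_D x (dblk e) -> existing_e x e = None.
Proof. by case E: (existing_e x e) => [y|] //; rewrite (existing_e_used E). Qed.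
Lemma existing_s_unused x e : ~~ used_C x (cblk e) -> existing_s x e = None.
Proof. by case E: (existing_s x e) => [y|] //; rewrite (existing_s_used E). Qed.

Lemma rho_s_inverse e y x : rho_s e y = Some x ->
  [/\ valid y, valid x, node_vertex y = s e, node_vertex x = r e & rho_e e x = Some y].
Proof.
rewrite /rho_s; case Vy: (valid y) => //=.
case P: (existing_s y e) => [x'|]; last first.
  case Ok: (fresh_s y e) => // -[<-]; case: y Vy P Ok => i w Vy _ Ok.
  have Vx : valid (i, (true, e) :: w) by rewrite valid_cons Vy Ok.
  move: Ok; rewrite /fresh_s => /andP [/andP [_ /eqP <-] _].
  by split => //=; rewrite /rho_e Vx /= eqxx.
move=> [<-]; case: y Vy P => i [|[[] e'] w] Vy //=.
  case: eqP => // Hc [<-]; have [Hi _] := spine_some Hc.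
  by rewrite /rho_e valid_nil Hi /= Hc eqxx (spine_path Hc).
case: eqP => // <- [<-]; move: (Vy); rewrite valid_cons => /andP [Vw Hok].
move: (Hok); rewrite /fresh_e => /andP [/andP [_ /eqP <-] Hunused].
by split => //=; rewrite /rho_e Vw (existing_e_unused Hunused) /= Hok.
Qed.

Lemma rho_e_inverse e x y : rho_e e x = Some y ->
  [/\ valid x, valid y, node_vertex x = r e, node_vertex y = s e & rho_s e y = Some x].
Proof.
rewrite /rho_e; case Vx: (valid x) => //=.
case P: (existing_e x e) => [y'|]; last first.
  case Ok: (fresh_e x e) => // -[<-]; case: x Vx P Ok => i w Vx _ Ok.
  have Vy : valid (i, (false, e) :: w) by rewrite valid_cons Vx Ok.
  move: Ok; rewrite /fresh_e => /andP [/andP [_ /eqP <-] _].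
  by split => //=; rewrite /rho_s Vy /= eqxx.
move=> [<-]; case: x Vx P => i [|[[] e'] w] Vx //=.
  case: i Vx => [|j] Vx //=; case: eqP => // Hc [<-]; have [Hj _] := spine_some Hc.
  by rewrite /rho_s valid_nil (ltnW Hj) /= Hc eqxx (spine_path Hc).
case: eqP => // <- [<-]; move: (Vx); rewrite valid_cons => /andP [Vw Hok].
move: (Hok); rewrite /fresh_s => /andP [/andP [_ /eqP <-] Hunused].
by split => //=; rewrite /rho_s Vw (existing_s_unused Hunused) /= Hok.
Qed.

Lemma rho_e_dblk_inj e e' x y y' : rho_e e x = Some y -> rho_e e' x = Some y' ->
  dblk e = dblk e' -> e = e'.
Proof.
rewrite /rho_e; case: (valid x) => //= + + Hd.
case P: (existing_e x e) => [z|]; case P': (existing_e x e') => [z'|].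
- by move=> _ _; apply: existing_e_uniq P P'.
- by rewrite /fresh_e -Hd (existing_e_used P) andbF.
- by rewrite /fresh_e Hd (existing_e_used P') andbF.
- rewrite /fresh_e Hd; case: (rep_T (dblk e') =P Some e) => [-> _|] //.
  by case: eqP => // -[].
Qed.

Lemma rho_s_cblk_inj e e' y x x' : rho_s e y = Some x -> rho_s e' y = Some x' ->
  cblk e = cblk e' -> e = e'.
Proof.
rewrite /rho_s; case: (valid y) => //= + + Hc.
case P: (existing_s y e) => [z|]; case P': (existing_s y e') => [z'|].
- by move=> _ _; apply: existing_s_uniq P P'.
- by rewrite /fresh_s -Hc (existing_s_used P) andbF.
- by rewrite /fresh_s Hc (existing_s_used P') andbF.
- rewrite /fresh_s Hc; case: (rep_S (cblk e') =P Some e) => [-> _|] //.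
  by case: eqP => // -[].
Qed.

Lemma rho_s_defined y X f0 : valid y -> inS X -> cblk f0 = X -> s f0 = node_vertex y ->
  exists2 f, cblk f = X & rho_s f y != None.
Proof.
move=> Vy HX Hf0 Hv; case Hused: (used_C y X).
  move: Hused; case: y Vy Hv => i [|[[] e] w] Vy Hv //=.
    case Hsp: (spine i) => [e|] //= /eqP <-; exists e => //.
    by rewrite /rho_s Vy /= Hsp eqxx.
  by move=> /eqP <-; exists e => //; rewrite /rho_s Vy /= eqxx.
have [f Hf] := rep_S_exists HX Hf0; have Hcf := rep_S_blk Hf.
exists f => //; rewrite /rho_s Vy /=; case: (existing_s y f) => //.
by rewrite /fresh_s Hcf Hf eqxx -Hv (hC (etrans Hcf (esym Hf0))) eqxx Hused.
Qed.

Lemma rho_e_defined x Y f0 : valid x -> inT Y -> dblk f0 = Y -> r f0 = node_vertex x ->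
  exists2 f, dblk f = Y & rho_e f x != None.
Proof.
move=> Vx HY Hf0 Hv; case Hused: (used_D x Y).
  move: Hused; case: x Vx Hv => i [|[[] e] w] Vx Hv //=.
    case: i Vx Hv => [|j] Vx Hv //=.
    case Hsp: (spine j) => [e|] //= /eqP <-; exists e => //.
    by rewrite /rho_e Vx /= Hsp eqxx.
  by move=> /eqP <-; exists e => //; rewrite /rho_e Vx /= eqxx.
have [f Hf] := rep_T_exists HY Hf0; have Hdf := rep_T_blk Hf.
exists f => //; rewrite /rho_e Vx /=; case: (existing_e x f) => //.
by rewrite /fresh_e Hdf Hf eqxx -Hv (hD (etrans Hdf (esym Hf0))) eqxx Hused.
Qed.

Lemma mcoef_edge_ghost e f y (h : Node -> K) : dblk f = dblk e ->
  mcoef tree_rho y h [:: ge V e; gs V f] =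
  if f == e then (if rho_s e y != None then h y else 0) else 0.
Proof.
move=> Hd; rewrite /mcoef /=; case Es: (rho_s f y) => [x|] /=; last first.
  by case: eqP => // Hfe; subst f; rewrite Es.
have [_ _ _ _ Hx] := rho_s_inverse Es.
case Ee: (rho_e e x) => [y'|] /=; last by case: eqP => // He; subst e; rewrite Hx in Ee.
have Hef := rho_e_dblk_inj Ee Hx (esym Hd); subst e.
by move: Ee; rewrite Hx => -[<-]; rewrite eqxx Es.
Qed.

Lemma mcoef_ghost_edge e f y (h : Node -> K) : cblk f = cblk e ->
  mcoef tree_rho y h [:: gs V e; ge V f] =
  if f == e then (if rho_e e y != None then h y else 0) else 0.
Proof.
move=> Hc; rewrite /mcoef /=; case Ee: (rho_e f y) => [x|] /=; last first.
  by case: eqP => // Hfe; subst f; rewrite Ee.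
have [_ _ _ _ Hx] := rho_e_inverse Ee.
case Es: (rho_s e x) => [y'|] /=; last by case: eqP => // He; subst e; rewrite Hx in Es.
have Hef := rho_s_cblk_inj Es Hx (esym Hc); subst e.
by move: Es; rewrite Hx => -[<-]; rewrite eqxx Ee.
Qed.

Lemma count_rho_s X lX e0 y : inS X -> enum_block cblk X lX -> cblk e0 = X ->
  count (fun e => rho_s e y != None) lX = valid y && (node_vertex y == s e0).
Proof.
move=> HX [uX memX] He0; case: (altP andP) => [[Vy /eqP Hv]|Hn].
  have [f Hf Hsf] := rho_s_defined Vy HX He0 (esym Hv).
  have -> : count (fun e => rho_s e y != None) lX = count_mem f lX.
    apply: eq_in_count => e; rewrite memX => /eqP He /=; apply/idP/eqP => [|->] //.
    case E1: (rho_s e y) => [x1|] // _; case E2: (rho_s f y) => [x2|]; last by rewrite E2 in Hsf.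
    exact: rho_s_cblk_inj E1 E2 (etrans He (esym Hf)).
  by rewrite count_uniq_mem // memX Hf eqxx.
rewrite (eq_in_count (a2 := pred0)) ?count_pred0 // => e; rewrite memX => /eqP He /=.
case E: (rho_s e y) => [x|] //; have [Vy _ Hv _ _] := rho_s_inverse E.
by move: Hn; rewrite Vy Hv (hC (etrans He (esym He0))) eqxx.
Qed.

Lemma count_rho_e Y lY e0 y : inT Y -> enum_block dblk Y lY -> dblk e0 = Y ->
  count (fun e => rho_e e y != None) lY = valid y && (node_vertex y == r e0).
Proof.
move=> HY [uY memY] He0; case: (altP andP) => [[Vy /eqP Hv]|Hn].
  have [f Hf Hef] := rho_e_defined Vy HY He0 (esym Hv).
  have -> : count (fun e => rho_e e y != None) lY = count_mem f lY.
    apply: eq_in_count => e; rewrite memY => /eqP He /=; apply/idP/eqP => [|->] //.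
    case E1: (rho_e e y) => [x1|] // _; case E2: (rho_e f y) => [x2|]; last by rewrite E2 in Hef.
    exact: rho_e_dblk_inj E1 E2 (etrans He (esym Hf)).
  by rewrite count_uniq_mem // memY Hf eqxx.
rewrite (eq_in_count (a2 := pred0)) ?count_pred0 // => e; rewrite memY => /eqP He /=.
case E: (rho_e e y) => [x|] //; have [Vy _ Hv _ _] := rho_e_inverse E.
by move: Hn; rewrite Vy Hv (hD (etrans He (esym He0))) eqxx.
Qed.

Lemma tree_kills_path_rel : annihilates tree_rho (@path_rel K V Ed s r true).
Proof.
move=> p Hp y h; rewrite /mcoef.
case: Hp => [[v [w ->]] | [[e ->] | [[e ->] | [[_ [e ->]] | [_ [e ->]]]]]];
  rewrite ?feval_cons ?feval_nil /=.
- case: (eqVneq v w) => [<-|ne]; rewrite ?feval_cons ?feval_nil /= /rho_v.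
    by case: ifP => [/andP [Vy /eqP Hv]|Hn] /=; rewrite ?Vy ?Hv ?eqxx ?Hn /=; ring.
  case: ifP => [/andP [Vy /eqP Hv]|_] /=; last by ring.
  by rewrite Vy Hv eq_sym (negbTE ne) /=; ring.
- case E: (rho_e e y) => [x|] /=; last by ring.
  have [_ Vx _ Hx _] := rho_e_inverse E.
  by rewrite /rho_v Vx Hx eqxx /=; ring.
- rewrite /rho_v; case E: (rho_e e y) => [x|] /=.
    by have [Vy _ Hy _ _] := rho_e_inverse E; rewrite Vy Hy eqxx /= E /=; ring.
  by case: ifP => _ /=; rewrite ?E /=; ring.
- case E: (rho_s e y) => [x|] /=; last by ring.
  have [_ Vx _ Hx _] := rho_s_inverse E.
  by rewrite /rho_v Vx Hx eqxx /=; ring.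
- rewrite /rho_v; case E: (rho_s e y) => [x|] /=.
    by have [Vy _ Hy _ _] := rho_s_inverse E; rewrite Vy Hy eqxx /= E /=; ring.
  by case: ifP => _ /=; rewrite ?E /=; ring.
Qed.

(* The relation sum_(Y in D) (XY)(YX')^* - delta_(X,X') s(X), X, X' in S,
   acts as zero: only the terms e e^* with e^* defined survive, and by
   count_rho_s they add up to the action of s(X) when X = X'. *)
Lemma tree_kills_S : annihilates tree_rho (@CL_rel_S K V Ed s CI DI cblk dblk inS).
Proof.
move=> _ [X [X' [lX [lX' [e0 [[HX _ EX [uX' memX'] He0] ->]]]]]] y h.
pose step e := if rho_s e y != None then h y else 0.
have row e : \sum_(f <- [seq f <- lX' | dblk f == dblk e])
    1 * mcoef tree_rho y h [:: ge V e; gs V f] = step e *+ (e \in lX').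
  rewrite big_filter big_mkcond -(count_uniq_mem e uX') -sum_cond_const.
  apply: eq_bigr => f _; case: (dblk f =P dblk e) => Hd; first by rewrite mul1r mcoef_edge_ghost.
  by rewrite /=; case: (f =P e) => // He; case: Hd; rewrite He.
rewrite feval_cat /feval big_allpairs_dep /=; under eq_bigr => e _ do rewrite row.
have [HXX|neX] := eqVneq X X'; last first.
  rewrite big_nil addr0 big1_seq // => e /andP [_]; case: EX => _ ->.
  by rewrite memX' => /eqP ->; rewrite (negbTE neX).
subst X'; rewrite big_cons big_nil (eq_big_seq step); last first.
  by move=> e; case: EX => _ ->; rewrite memX' => ->.
rewrite sum_cond_const (count_rho_s y HX EX He0) /mcoef /= /rho_v.
by case: ifP => _ /=; ring.
Qed.

Lemma tree_kills_T : annihilates tree_rho (@CL_rel_T K V Ed r CI DI cblk dblk inT).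
Proof.
move=> _ [Y [Y' [lY [lY' [e0 [[HY _ EY [uY' memY'] He0] ->]]]]]] y h.
pose step e := if rho_e e y != None then h y else 0.
have row e : \sum_(f <- [seq f <- lY' | cblk f == cblk e])
    1 * mcoef tree_rho y h [:: gs V e; ge V f] = step e *+ (e \in lY').
  rewrite big_filter big_mkcond -(count_uniq_mem e uY') -sum_cond_const.
  apply: eq_bigr => f _; case: (cblk f =P cblk e) => Hc; first by rewrite mul1r mcoef_ghost_edge.
  by rewrite /=; case: (f =P e) => // He; case: Hc; rewrite He.
rewrite feval_cat /feval big_allpairs_dep /=; under eq_bigr => e _ do rewrite row.
have [HYY|neY] := eqVneq Y Y'; last first.
  rewrite big_nil addr0 big1_seq // => e /andP [_]; case: EY => _ ->.
  by rewrite memY' => /eqP ->; rewrite (negbTE neY).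
subst Y'; rewrite big_cons big_nil (eq_big_seq step); last first.
  by move=> e; case: EY => _ ->; rewrite memY' => ->.
rewrite sum_cond_const (count_rho_e y HY EY He0) /mcoef /= /rho_v.
by case: ifP => _ /=; ring.
Qed.

Lemma tree_annihilates :
  annihilates tree_rho (@CL_rel K V Ed s r CI DI cblk dblk inS inT).
Proof.
move=> p [Hp | [Hp | Hp]].
- exact: tree_kills_path_rel.
- exact: tree_kills_S.
- exact: tree_kills_T.
Qed.

Lemma act_edges_off_spine L i w0 e' :
  act tree_rho (map (@ge V Ed) L) (i, (false, e') :: w0) = None \/
  exists e'' w', act tree_rho (map (@ge V Ed) L) (i, (false, e') :: w0) =
                 Some (i, (false, e'') :: w').
Proof.
elim: L => [|e L IH] /=; first by right; exists e', w0.
case: IH => [->|[e'' [w' ->]]] /=; first by left.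
rewrite /rho_e; case: (valid _) => /=; last by left.
case: (fresh_e _ e) => /=; last by left.
by right; exists e, ((false, e'') :: w').
Qed.

Lemma spine_word_unique L j :
  act tree_rho (map (@ge V Ed) L) (j, [::]) = Some (0%N, [::]) -> L = take j es.
Proof.
elim/last_ind: L j => [|L e IH] j /=; first by case=> ->; rewrite take0.
have off_spine i : act tree_rho (map (@ge V Ed) L) (i, [:: (false, e)]) <> Some (0%N, [::]).
  by case: (act_edges_off_spine L i [::] e) => [->|[e'' [w' ->]]].
rewrite map_rcons act_rcons /= /rho_e; case: (valid _) => //=.
case: j => [|j] /=; first by case: (fresh_e _ e) => //= /off_spine.
case Hsp: (spine j == Some e); last by case: (fresh_e _ e) => //= /off_spine.
by move=> /IH ->; move/eqP: Hsp => /spine_some [Hj Hn]; rewrite (take_nth e Hj) Hn.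
Qed.

Lemma spine_word_acts j : (j <= size es)%N ->
  act tree_rho (map (@ge V Ed) (take j es)) (j, [::]) = Some (0%N, [::]).
Proof.
elim: j => [|j IH] Hj; first by rewrite take0.
have [e Hsp] : exists e, spine j = Some e.
  rewrite /spine; case E: nth => [e|]; first by exists e.
  by have := @mem_nth _ None (map Some es) j; rewrite size_map Hj E => /(_ isT) /mapP [].
have [Hj' Hn] := spine_some Hsp.
rewrite (take_nth e Hj') Hn map_rcons act_rcons /= /rho_e valid_nil Hj /= Hsp eqxx /=.
exact: IH (ltnW Hj).
Qed.

End TreeAction.

Section Injectivity.
Variables (K : fieldType) (V Ed : eqType) (s r : Ed -> V)
  (CI DI : eqType) (cblk : Ed -> CI) (dblk : Ed -> DI)
  (inS : CI -> Prop) (inT : DI -> Prop).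
Hypothesis hC : forall e f, cblk e = cblk f -> s e = s f.
Hypothesis hD : forall e f, dblk e = dblk f -> r e = r f.
Local Notation CL := (@CL_rel K V Ed s r CI DI cblk dblk inS inT).
Local Notation PR := (@path_rel K V Ed s r false).

Variable f : fpoly K (gen V Ed).
Hypothesis f_nonghost : all (fun x => all (@nonghost V Ed) x.2) f.
Hypothesis f_in_CL : in_ideal predT CL f.

Definition nf_pairing (weight : NF V Ed -> K) : K :=
  \sum_(x <- f) x.1 * (if nf s r x.2 is Some m then weight m else 0).

Definition nf_coef (m : NF V Ed) : K := \sum_(x <- f | nf s r x.2 == Some m) x.1.

Lemma nf_pairing_indicator m0 : nf_pairing (fun m => (m == m0)%:R) = nf_coef m0.
Proof.
rewrite /nf_coef big_mkcond; apply: eq_bigr => x _.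
case: (nf s r x.2) => [m|] /=; last by rewrite mulr0.
by rewrite (inj_eq Some_inj); case: eqP; rewrite ?mulr1 ?mulr0.
Qed.

Lemma nf_pairingD w1 w2 : nf_pairing (w1 \+ w2) = nf_pairing w1 + nf_pairing w2.
Proof.
rewrite /nf_pairing -big_split; apply: eq_bigr => x _.
by case: (nf s r x.2) => [m|] /=; rewrite ?mulrDr ?mulr0 ?addr0.
Qed.

Lemma nf_pairing_eq0 weight : (forall m, nf_coef m = 0) -> nf_pairing weight = 0.
Proof.
move=> H; have -> : nf_pairing weight =
    feval [seq (x.1, nf s r x.2) | x <- f] (fun o => if o is Some m then weight m else 0).
  by rewrite /feval big_map.
by apply: feval_eq0 => -[m _|]; [rewrite big_map; apply: H | rewrite eqxx].
Qed.

Lemma path_rel_CL p : PR p -> CL p.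
Proof.
move=> [H|[H|[H|[[F _]|[F _]]]]] //; left.
- by left.
- by right; left.
- by right; right; left.
Qed.

(* An action realising A_K(dot E) gives the linear relation
   nf_pairing (m |-> [nf_word m . b = z]) = 0 among the coefficients of f;
   the weight may be rewritten on normal forms that are paths. *)
Lemma nf_pairing_action (N : eqType) (rho : gen V Ed -> N -> option N) b z weight :
  annihilates rho CL ->
  (forall m, nf_is_path s r m -> (act rho (nf_word m) b == Some z)%:R = weight m) ->
  nf_pairing weight = 0.
Proof.
move=> Hrho Hweight.
have HPR : annihilates rho PR by move=> p /path_rel_CL; apply: Hrho.
rewrite -(annihilates_ideal Hrho f_in_CL b (fun u => (u == z)%:R)).
apply: eq_big_seq => x xf; rewrite mcoef_indicator (act_nf HPR _ (allP f_nonghost x xf)).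
case E: (nf s r x.2) => [m|] //=.
by rewrite Hweight // (nf_path E).
Qed.

(* The zero action, under which only the empty word acts (as the identity). *)
Definition zero_rho (g : gen V Ed) (u : unit) : option unit := None.

(* Every Cohn-Leavitt relation involves only nonempty words. *)
Lemma zero_annihilates : annihilates zero_rho CL.
Proof.
move=> p Hp y h; rewrite /mcoef.
case: Hp => [[[v [w ->]] | [[e ->] | [[e ->] | [[_ [e ->]] | [_ [e ->]]]]]] | [HS | HT]].
- by case: ifP => _; rewrite !feval_cons ?feval_nil /= !mulr0 ?addr0.
- by rewrite !feval_cons ?feval_nil /= !mulr0 ?addr0.
- by rewrite !feval_cons ?feval_nil /= !mulr0 ?addr0.
- by rewrite !feval_cons ?feval_nil /= !mulr0 ?addr0.
- by rewrite !feval_cons ?feval_nil /= !mulr0 ?addr0.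
- case: HS => [X [X' [lX [lX' [e0 [_ ->]]]]]].
  rewrite feval_cat /feval big_allpairs_dep big1 ?add0r; last first.
    by move=> e _; rewrite big1 // => g _; rewrite /= mulr0.
  by case: ifP => _; rewrite ?big_cons big_nil /= ?mulr0 ?addr0.
- case: HT => [Y [Y' [lY [lY' [e0 [_ ->]]]]]].
  rewrite feval_cat /feval big_allpairs_dep big1 ?add0r; last first.
    by move=> e _; rewrite big1 // => g _; rewrite /= mulr0.
  by case: ifP => _; rewrite ?big_cons big_nil /= ?mulr0 ?addr0.
Qed.

Lemma nf_coef_empty : nf_coef None = 0.
Proof.
rewrite -nf_pairing_indicator; apply: (nf_pairing_action (b := tt) (z := tt) zero_annihilates).
by move=> [[u|[e L]]|] _ //=; case: (act zero_rho _ tt).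
Qed.

(* The tree action with empty spine at v: the only normal forms fixing its
   root are v and the empty word, whence c_v + c_(empty word) = 0. *)
Lemma nf_coef_vertex v : nf_coef (Some (inl v)) = 0.
Proof.
have spine_v i e : spine [::] i = Some e -> s e = spine_vertex r v [::] i.
  by rewrite /spine nth_nil.
suff: nf_coef (Some (inl v)) + nf_coef None = 0 by rewrite nf_coef_empty addr0.
rewrite -!nf_pairing_indicator -nf_pairingD.
apply: (nf_pairing_action (b := (0%N, [::])) (z := (0%N, [::])) (tree_annihilates hC hD spine_v)).
move=> [[u|[e L]]|] _ /=.
- rewrite /rho_v valid_nil /= (inj_eq Some_inj) (inj_eq inl_inj) addr0 (eq_sym u).
  by case: (v == u).
- rewrite addr0; case: eqP => // H.
  by have := spine_word_unique (L := e :: L) (j := 0%N) H.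
- by rewrite add0r.
Qed.

(* The tree action with spine e :: L: the only normal form carrying the top
   of the spine to its root is e :: L itself. *)
Lemma nf_coef_path e L :
  nf_is_path s r (Some (inr (e, L))) -> nf_coef (Some (inr (e, L))) = 0.
Proof.
move=> /= HL.
have spine_eL i e0 : spine (e :: L) i = Some e0 -> s e0 = spine_vertex r (s e) (e :: L) i.
  case: i => [|j] /=; first by case=> ->.
  move=> /(spine_some (es := L)) [Hj Hn].
  rewrite /spine (nth_map e0) /=; last exact: leqW.
  by have := pathP e0 HL j Hj; rewrite Hn => /eqP ->.
rewrite -nf_pairing_indicator.
apply: (nf_pairing_action (b := (size (e :: L), [::])) (z := (0%N, [::]))
          (tree_annihilates hC hD spine_eL)).
have top := spine_word_acts s r cblk dblk inS inT (s e) (leqnn (size (e :: L))).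
rewrite take_size in top.
move=> [[u|[e' L']]|] _ /=.
- by rewrite /rho_v; case: ifP.
- rewrite !(inj_eq Some_inj) (inj_eq inr_inj).
  case: eqP => [H|H]; last by case: eqP => // -[E1 E2]; case: H; rewrite E1 E2.
  have := spine_word_unique (L := e' :: L') (j := size (e :: L)) H.
  by rewrite take_size => -[-> ->]; rewrite eqxx.
- by [].
Qed.

(* All total coefficients of f vanish; words whose normal form is not a
   path do not occur. *)
Lemma nf_coef_eq0 m : nf_coef m = 0.
Proof.
case Hm: (nf_is_path s r m); last first.
  by rewrite /nf_coef big1 // => x /eqP E; move: (nf_path E); rewrite Hm.
case: m Hm => [[v|[e L]]|] Hm.
- exact: nf_coef_vertex.
- exact: nf_coef_path.
- exact: nf_coef_empty.
Qed.

(* f is congruent modulo the path-algebra relations to the sum of the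
   normal forms of its terms, which is 0. *)
Theorem in_path_ideal : in_ideal (@nonghost V Ed) PR f.
Proof.
pose D := flatten [seq fsandwich x.1 [::] (nf_diff K s r x.2) [::] | x <- f].
have HD : in_ideal (@nonghost V Ed) PR D.
  apply: in_ideal_flatten => p /mapP [x xf ->].
  by apply: in_ideal_sandwich => //; apply: nf_diff_ideal; apply: (allP f_nonghost x xf).
apply: (in_ideal_feval HD) => h.
rewrite feval_flatten big_map.
transitivity (\sum_(x <- f)
  (x.1 * h x.2 - x.1 * (if nf s r x.2 is Some m then h (nf_word m) else 0))).
  apply: eq_bigr => x _; rewrite feval_sandwich /nf_diff.
  by case: (nf s r x.2) => [m|]; rewrite ?feval_cons ?feval_nil /= !cats0; ring.
rewrite sumrB -/(nf_pairing (fun m => h (nf_word m))) nf_pairing_eq0 ?subr0 //.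
exact: nf_coef_eq0.
Qed.

End Injectivity.

Unset Implicit Arguments.

(* The main theorem. *)
Theorem mainTheorem4 (K : fieldType) (V Ed : eqType) (s r : Ed -> V)
    (CI DI : eqType) (cblk : Ed -> CI) (dblk : Ed -> DI)
    (inS : CI -> Prop) (inT : DI -> Prop)
    (hC : forall e f, cblk e = cblk f -> s e = s f)
    (hD : forall e f, dblk e = dblk f -> r e = r f)
    (hCD : forall e f, cblk e = cblk f -> dblk e = dblk f -> e = f)
    (hS : forall X, inS X -> (exists e, cblk e = X) /\ exists l, enum_block cblk X l)
    (hT : forall Y, inT Y -> (exists e, dblk e = Y) /\ exists l, enum_block dblk Y l)
    (f : fpoly K (gen V Ed)) :
  all (fun x => all (@nonghost V Ed) x.2) f ->
  in_ideal predT (@CL_rel K V Ed s r CI DI cblk dblk inS inT) f ->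
  in_ideal (@nonghost V Ed) (@path_rel K V Ed s r false) f.
Proof. by move=> f_nonghost f_in_CL; apply: (in_path_ideal hC hD f_nonghost f_in_CL). Qed.
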